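(* Let $Q$ be a finite group and fix integers $g,r\ge 1$. Let $p(Q,g,r,n)$ be the probability that the group $G=\langle a_1,\dots,a_g\mid R_1,\dots,R_r\rangle$ of a random $g$-generator, $r$-relator presentation of complexity $n$ admits an epimorphism onto $Q$. Then $p(Q,g,r,n)$ converges as $n\to\infty$. Moreover, for each $k\ge 0$ the probability that $G$ has exactly $k$ epimorphisms onto $Q$, counted modulo $\mathrm{Aut}(Q)$, also converges as $n\to\infty$.
   Context: A random relator of length (complexity) $n$ in the free group $F_g$ on $a_1,\dots,a_g$ is a word $x_1x_2\cdots x_n$ where each letter $x_j$ is one of $a_i^{\pm1}$ ($1\le i\le g$) or the identity, all $(2g+1)^n$ such words being equally likely. A random presentation of complexity $n$ uses $r$ independent random relators $R_1,\dots,R_r$ of length $n$. Two epimorphisms to $Q$ are identified if they differ by an automorphism of $Q$ (equivalently, one counts normal subgroups with quotient $Q$). *)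

From Stdlib Require Import Reals.
From Coquelicot Require Import Coquelicot.
From HB Require Import structures.
From mathcomp Require Import all_boot all_order all_fingroup.
Set Implicit Arguments. Unset Strict Implicit. Unset Printing Implicit Defensive.

(* A letter over a_1..a_g: None = identity, Some (i,false) = a_i,
   Some (i,true) = a_i^{-1}.  There are exactly 2g+1 letters. *)
Definition letter (g : nat) : finType := option ('I_g * bool).

Definition word (g n : nat) : finType := {ffun 'I_n -> letter g}.

Definition presentation (g r n : nat) : finType := {ffun 'I_r -> word g n}.

Section Eval.
Variable gT : finGroupType.
Variables g r n : nat.

Definition eval_letter (x : {ffun 'I_g -> gT}) (l : letter g) : gT :=
  match l with
  | None => 1%g
  | Some (i, b) => if b then ((x i)^-1)%g else x i
  end.

Definition eval_word (x : {ffun 'I_g -> gT}) (w : word g n) : gT :=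
  (\prod_(j < n) eval_letter x (w j))%g.

(* Epimorphisms <a_1..a_g | R_1..R_r> ->> gT, identified (via the universal
   property of the presentation) with the images of the generators: tuples
   generating gT and killing every relator. *)
Definition epis (P : presentation g r n) : {set {ffun 'I_g -> gT}} :=
  [set x : {ffun 'I_g -> gT} |
     (<<[set x i | i : 'I_g]>>%g == [set: gT]) &&
     [forall j : 'I_r, eval_word x (P j) == 1%g]].

Definition aut_orbit (x : {ffun 'I_g -> gT}) : {set {ffun 'I_g -> gT}} :=
  [set [ffun i => a (x i)] | a : {perm gT} in Aut [set: gT]].

Definition num_epi_mod_aut (P : presentation g r n) : nat :=
  #|[set aut_orbit x | x in epis P]|.

End Eval.

Definition p_epi (gT : finGroupType) (g r n : nat) : R :=
  INR #|[set P : presentation g r n | epis gT P != set0]|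
  / INR #|{: presentation g r n}|.

Definition p_epi_exactly (gT : finGroupType) (g r : nat) (k n : nat) : R :=
  INR #|[set P : presentation g r n | num_epi_mod_aut gT P == k]|
  / INR #|{: presentation g r n}|.

From Stdlib Require Import Reals.
From Coquelicot Require Import Coquelicot.
From mathcomp Require Import all_boot all_order all_fingroup all_algebra.
From mathcomp Require Import Rstruct lra.
Import Order.TTheory GRing.Theory Num.Theory.
Set Implicit Arguments. Unset Strict Implicit. Unset Printing Implicit Defensive.

(* A random relator is a lazy random walk: every step may be the identity
   letter.  Let the letter l act on Q^g * Q by (x, y) |-> (x, y * x(l)); a
   word w then acts by (x, y) |-> (x, y * w(x)), recording its value under
   every assignment x of the generators at once, and whether x is an
   epimorphism killing R_1, ..., R_r depends only on the r permutations so
   obtained.  These are independent lazy random walks on a finite group, and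
   such a walk equidistributes on the subgroup H generated by its steps: the
   L^1 distance to the uniform law on H never increases under convolution, and
   once every element of H is reached in m steps with probability at least
   N^-m (N steps being available), it shrinks by the factor 1 - #|H| N^-m
   every m steps.  So the law of
   the r-tuple of permutations converges, and with it the probability of every
   event determined by that tuple. *)

Local Open Scope nat_scope.

Section WalkCount.
Variables (K : finGroupType) (L : finType) (s : L -> K).

Definition walk_count n (k : K) :=
  #|[set w : {ffun 'I_n -> L} | (\prod_(i < n) s (w i))%g == k]|.

Definition snoc_walk n (w : {ffun 'I_n -> L}) (l : L) : {ffun 'I_n.+1 -> L} :=
  [ffun i => oapp w l (unlift ord_max i)].

Lemma snoc_walk_inj n l : injective (fun w : {ffun 'I_n -> L} => snoc_walk w l).
Proof.
move=> w1 w2 /ffunP e; apply/ffunP => j.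
by have := e (lift ord_max j); rewrite !ffunE liftK.
Qed.

Lemma snoc_walk_last n (w : {ffun 'I_n -> L}) l : snoc_walk w l ord_max = l.
Proof. by rewrite ffunE unlift_none. Qed.

Lemma prod_snoc_walk n (w : {ffun 'I_n -> L}) l :
  (\prod_(i < n.+1) s (snoc_walk w l i) = (\prod_(i < n) s (w i)) * s l)%g.
Proof.
rewrite big_ord_recr /= snoc_walk_last; congr (_ * _)%g.
apply: eq_bigr => j _; rewrite ffunE.
have -> : widen_ord (leqnSn n) j = lift ord_max j.
  by apply: val_inj; rewrite /= /bump leqNgt ltn_ord.
by rewrite liftK.
Qed.

Lemma snoc_walk_split n (w : {ffun 'I_n.+1 -> L}) :
  w = snoc_walk [ffun j => w (lift ord_max j)] (w ord_max).
Proof.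
by apply/ffunP => i; rewrite ffunE; case: unliftP => [j ->|->] /=; rewrite ?ffunE.
Qed.

Lemma walk_count0 k : walk_count 0 k = (k == 1%g).
Proof.
rewrite /walk_count.
have -> : [set w : {ffun 'I_0 -> L} | (\prod_(i < 0) s (w i))%g == k] =
          [set _ | k == 1%g].
  by apply/setP => w; rewrite !inE big_ord0 eq_sym.
case: eqP => _; rewrite cardsE; last exact: eq_card0.
by rewrite -[LHS]/#|{ffun 'I_0 -> L}| card_ffun card_ord.
Qed.

Lemma walk_countS n k :
  walk_count n.+1 k = \sum_(l : L) walk_count n (k * (s l)^-1)%g.
Proof.
rewrite /walk_count -sum1_card.
rewrite (partition_big (fun w : {ffun 'I_n.+1 -> L} => w ord_max) xpredT) //=.
apply: eq_bigr => l _; rewrite sum1dep_card -(card_imset _ (@snoc_walk_inj n l)).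
apply: eq_card => w; rewrite !inE; apply/andP/imsetP => [[/eqP <- /eqP <-]|[w' + ->]].
  exists [ffun j => w (lift ord_max j)]; last exact: snoc_walk_split.
  by rewrite inE {2}[w]snoc_walk_split prod_snoc_walk mulgK.
by rewrite inE prod_snoc_walk snoc_walk_last => /eqP ->; rewrite mulgKV !eqxx.
Qed.

Lemma walk_count_sum n : \sum_(k : K) walk_count n k = (#|L| ^ n)%N.
Proof.
rewrite -[in RHS](card_ord n) -card_ffun -sum1_card.
rewrite (partition_big (fun w : {ffun 'I_n -> L} => \prod_(i < n) s (w i))%g xpredT)
  //=.
by apply: eq_bigr => k _; rewrite sum1dep_card.
Qed.

Lemma walk_count_conv n m h :
  walk_count (n + m) h = \sum_(k : K) walk_count m k * walk_count n (h * k^-1)%g.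
Proof.
elim: m h => [|m IH] h.
  rewrite addn0 (bigD1 1%g) //= big1 => [|k /negbTE]; last by rewrite walk_count0 => ->.
  by rewrite walk_count0 eqxx invg1 mulg1 mul1n addn0.
rewrite addnS walk_countS; under eq_bigr do rewrite IH.
under [RHS]eq_bigr do rewrite walk_countS big_distrl /=.
rewrite [RHS]exchange_big /=; apply: eq_bigr => l _.
rewrite [RHS](reindex_inj (mulIg (s l))) /=; apply: eq_bigr => k _.
by rewrite mulgK invMg mulgA.
Qed.

Let steps := [set s l | l : L].

Lemma walk_count_out n h : h \notin <<steps>>%g -> walk_count n h = 0.
Proof.
move=> hH; apply/eqP; rewrite cards_eq0; apply/eqP/setP => w; rewrite !inE.
apply: contraNF hH => /eqP <-; apply: group_prod => i _.
by rewrite mem_gen ?imset_f.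
Qed.

Lemma walk_count_sum_span n : \sum_(k in <<steps>>%g) walk_count n k = #|L| ^ n.
Proof.
rewrite -(walk_count_sum n) [RHS](bigID (mem <<steps>>%g)) /=.
by rewrite [X in _ = _ + X]big1 ?addn0 // => k /walk_count_out.
Qed.

Lemma walk_count_gt0 n k : k \in (steps ^+ n)%g -> 0 < walk_count n k.
Proof.
elim: n k => [|n IH] k; first by rewrite expg0 => /set1P ->; rewrite walk_count0 eqxx.
rewrite expgSr => /mulsgP [t _ /IH t_gt0 /imsetP [l _ ->] ->].
by rewrite walk_countS (bigD1 l) //= mulgK ltn_addr.
Qed.

Hypothesis one_step : 1%g \in steps.

Lemma walk_count_gt0_span :
  exists m, forall h, h \in <<steps>>%g -> 0 < walk_count m h.
Proof.
have [m gen_m] := gen_expgs steps; exists m => h.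
by rewrite gen_m (setUidPr _) ?sub1set //; apply: walk_count_gt0.
Qed.

End WalkCount.

Section GroupSums.
Variables (K : finGroupType) (H : {group K}).

Lemma reindex_group_mulr (R : Type) (idx : R) (op : Monoid.com_law idx)
    (F : K -> R) k :
  k \in H -> \big[op/idx]_(h in H) F (h * k^-1)%g = \big[op/idx]_(h in H) F h.
Proof.
move=> kH; rewrite (reindex_inj (mulIg k)) /=.
by apply: eq_big => h; [rewrite groupMr | rewrite mulgK].
Qed.

Lemma reindex_group_mulV (R : Type) (idx : R) (op : Monoid.com_law idx)
    (F : K -> R) h :
  h \in H -> \big[op/idx]_(k in H) F (h * k^-1)%g = \big[op/idx]_(k in H) F k.
Proof.
move=> hH; rewrite (reindex_inj (inj_comp (mulIg h) (@invg_inj K))) /=.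
by apply: eq_big => k; [rewrite groupMr // groupV | rewrite invMg invgK mulKVg].
Qed.

Local Open Scope ring_scope.

Lemma sum_norm_conv_le (R : numDomainType) (w d : K -> R) :
  {in H, forall k, 0 <= w k} ->
  \sum_(h in H) `|\sum_(k in H) w k * d (h * k^-1)%g|
    <= (\sum_(k in H) w k) * \sum_(h in H) `|d h|.
Proof.
move=> w_ge0; rewrite mulr_suml.
apply: le_trans (_ : \sum_(h in H) \sum_(k in H) w k * `|d (h * k^-1)%g| <= _).
  apply: ler_sum => h _; apply: le_trans (ler_norm_sum _ _ _) _.
  by apply: ler_sum => k kH; rewrite normrM ger0_norm ?w_ge0.
rewrite exchange_big /=; apply: ler_sum => k kH.
by rewrite -mulr_sumr (reindex_group_mulr _ (fun x => `|d x|)).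
Qed.

End GroupSums.

Section WalkProb.
Local Open Scope ring_scope.
Variables (R : numFieldType) (K : finGroupType) (L : finType) (s : L -> K).
Hypothesis one_step : 1%g \in [set s l | l : L].
Local Notation H := <<[set s l | l : L]>>%G.
Local Notation N := #|L|.

Definition walk_prob n k : R := (walk_count s n k)%:R / (N ^ n)%:R.

Let N_gt0 : (0 < N)%N.
Proof. by have /imsetP [l _ _] := one_step; apply/card_gt0P; exists l. Qed.

Lemma walk_prob_out n k : k \notin H -> walk_prob n k = 0.
Proof. by move=> kH; rewrite /walk_prob walk_count_out // mul0r. Qed.

Lemma walk_prob_sum n : \sum_(k in H) walk_prob n k = 1.
Proof.
rewrite -mulr_suml -natr_sum walk_count_sum_span divff //.
by rewrite pnatr_eq0 -lt0n expn_gt0 N_gt0.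
Qed.

Lemma walk_prob_conv n m h :
  walk_prob (n + m)%N h = \sum_(k in H) walk_prob m k * walk_prob n (h * k^-1)%g.
Proof.
rewrite /walk_prob walk_count_conv natr_sum mulr_suml (bigID (mem H)) /=.
rewrite [X in _ + X]big1 ?addr0 => [|k /walk_count_out ->]; last by rewrite mul0n mul0r.
by apply: eq_bigr => k _; rewrite addnC expnD !natrM invfM mulrACA.
Qed.

Local Notation u := (#|H|%:R^-1 : R).

Lemma walk_prob_dev_conv n m h : walk_prob (n + m)%N h - u =
  \sum_(k in H) walk_prob m k * (walk_prob n (h * k^-1)%g - u).
Proof.
under [RHS]eq_bigr do rewrite mulrBr.
by rewrite sumrB -mulr_suml walk_prob_sum mul1r walk_prob_conv.
Qed.

Definition walk_dev n := \sum_(h in H) `|walk_prob n h - u|.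

Lemma walk_dev_ge0 n : 0 <= walk_dev n.
Proof. by apply: sumr_ge0 => h _; apply: normr_ge0. Qed.

Lemma walk_prob_dev_le n h : h \in H -> `|walk_prob n h - u| <= walk_dev n.
Proof.
move=> hH; rewrite /walk_dev (bigD1 h) //= lerDl.
by apply: sumr_ge0 => k _; apply: normr_ge0.
Qed.

Lemma walk_dev_conv_le n m (w : K -> R) : {in H, forall k, 0 <= w k} ->
  {in H, forall h, walk_prob (n + m)%N h - u =
                   \sum_(k in H) w k * (walk_prob n (h * k^-1)%g - u)} ->
  walk_dev (n + m)%N <= (\sum_(k in H) w k) * walk_dev n.
Proof.
move=> w_ge0 w_conv; rewrite /walk_dev.
under eq_bigr => h hH do rewrite w_conv //.
exact: (sum_norm_conv_le (fun k => walk_prob n k - u)).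
Qed.

Lemma walk_dev_nonincreasing n : walk_dev n.+1 <= walk_dev n.
Proof.
rewrite -addn1 -[leRHS]mul1r -(walk_prob_sum 1).
apply: walk_dev_conv_le => [k _|h _]; last exact: walk_prob_dev_conv.
by rewrite divr_ge0 ?ler0n.
Qed.

Lemma walk_dev_contraction :
  exists m, exists2 rho, 0 < rho &
    forall n, walk_dev (n + m)%N <= (1 - rho) * walk_dev n.
Proof.
have [m walk_gt0] := walk_count_gt0_span one_step; exists m.
exists (#|H|%:R / (N ^ m)%:R) => [|n].
  by rewrite divr_gt0 ?ltr0n ?cardG_gt0 ?expn_gt0 ?N_gt0.
have -> : 1 - #|H|%:R / (N ^ m)%:R =
          \sum_(k in H) (walk_prob m k - (N ^ m)%:R^-1).
  by rewrite sumrB walk_prob_sum sumr_const mulr_natl.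
apply: walk_dev_conv_le => [k kH|h hH].
  rewrite subr_ge0 /walk_prob -[leLHS]mul1r ler_pM2r ?ler1n ?walk_gt0 //.
  by rewrite invr_gt0 ltr0n expn_gt0 N_gt0.
rewrite walk_prob_dev_conv; under [RHS]eq_bigr do rewrite mulrBl.
rewrite sumrB -mulr_sumr (reindex_group_mulV _ (fun k => walk_prob n k - u)) //.
rewrite sumrB walk_prob_sum sumr_const -[_^-1 *+ _]mulr_natr mulVf.
  by rewrite subrr mulr0 subr0.
by rewrite pnatr_eq0 -lt0n cardG_gt0.
Qed.

End WalkProb.

Section WalkLimit.
Local Open Scope ring_scope.

Lemma is_lim_seq_contracting (v : nat -> R) m (rho : R) :
  (forall n, 0 <= v n) -> (forall n, v n.+1 <= v n) -> 0 < rho ->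
  (forall n, v (n + m)%N <= (1 - rho) * v n) -> is_lim_seq v (0 : R).
Proof.
move=> v_ge0 v_decr rho_gt0 v_contr.
have [l v_l] : ex_finite_lim_seq v.
  by apply: (ex_finite_lim_seq_decr _ 0) => n; apply/RleP.
have l_ge0 := is_lim_seq_le (fun=> 0) v (0 : R) l (fun n => elimT RleP (v_ge0 n))
  (is_lim_seq_const 0) v_l.
have l_contr := is_lim_seq_le _ _ _ _ (fun n => elimT RleP (v_contr n))
  (proj1 (is_lim_seq_incr_n v m l) v_l) (is_lim_seq_scal_l v (1 - rho) l v_l).
move/RleP: l_ge0; move/RleP: l_contr; rewrite RmultE RminusE R1E => l_contr l_ge0.
suff l0 : l = 0 by move: v_l; rewrite l0.
apply/eqP; rewrite eq_le l_ge0 andbT; nra.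
Qed.

Variables (K : finGroupType) (L : finType) (s : L -> K).
Hypothesis one_step : 1%g \in [set s l | l : L].
Local Notation H := <<[set s l | l : L]>>%G.

Lemma walk_dev_lim : is_lim_seq (walk_dev R s) (0 : R).
Proof.
have [m [rho rho_gt0 dev_contr]] := walk_dev_contraction R one_step.
apply: (is_lim_seq_contracting _ _ rho_gt0 dev_contr) => n.
  exact: walk_dev_ge0.
exact: walk_dev_nonincreasing.
Qed.

Lemma walk_prob_lim k :
  is_lim_seq (fun n => walk_prob R s n k) (if k \in H then #|H|%:R^-1 else 0 : R).
Proof.
case: ifPn => kH; last first.
  by apply: is_lim_seq_ext (is_lim_seq_const 0) => n; rewrite walk_prob_out.
have := is_lim_seq_plus' _ _ _ _ (is_lim_seq_const #|H|%:R^-1) walk_dev_lim.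
have := is_lim_seq_minus' _ _ _ _ (is_lim_seq_const #|H|%:R^-1) walk_dev_lim.
rewrite Rplus_0_r Rminus_0_r; apply: is_lim_seq_le_le => n.
have := walk_prob_dev_le R n kH; rewrite ler_distl => /andP [lo hi].
by split; apply/RleP.
Qed.

End WalkLimit.

Section BigLimits.
Local Open Scope ring_scope.
Variables (I : Type) (r : seq I) (P : pred I) (u : I -> nat -> R) (l : I -> R).
Hypothesis u_l : forall i, P i -> is_lim_seq (u i) (l i).

Lemma is_lim_seq_sum :
  is_lim_seq (fun n => \sum_(i <- r | P i) u i n) (\sum_(i <- r | P i) l i).
Proof.
elim: r => [|i r' IH].
  by rewrite big_nil; apply: is_lim_seq_ext (is_lim_seq_const 0) => n; rewrite big_nil.
rewrite big_cons; case: ifP => Pi.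
  apply: is_lim_seq_ext (is_lim_seq_plus' _ _ _ _ (u_l Pi) IH) => n.
  by rewrite big_cons Pi.
by apply: is_lim_seq_ext IH => n; rewrite big_cons Pi.
Qed.

Lemma is_lim_seq_prod :
  is_lim_seq (fun n => \prod_(i <- r | P i) u i n) (\prod_(i <- r | P i) l i).
Proof.
elim: r => [|i r' IH].
  by rewrite big_nil; apply: is_lim_seq_ext (is_lim_seq_const 1) => n; rewrite big_nil.
rewrite big_cons; case: ifP => Pi.
  apply: is_lim_seq_ext (is_lim_seq_mult' _ _ _ _ (u_l Pi) IH) => n.
  by rewrite big_cons Pi.
by apply: is_lim_seq_ext IH => n; rewrite big_cons Pi.
Qed.

End BigLimits.

Section PresentationPerms.
Variables (gT : finGroupType) (g r : nat).
Local Notation assignment := {ffun 'I_g -> gT}.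
Local Notation perm_pres := {ffun 'I_r -> {perm assignment * gT}}.

Lemma letter_perm_inj (l : letter g) :
  injective (fun p : assignment * gT => (p.1, p.2 * eval_letter p.1 l)%g).
Proof. by move=> [x y] [x' y'] /= [<- /mulIg ->]. Qed.

Definition letter_perm (l : letter g) : {perm assignment * gT} :=
  perm (@letter_perm_inj l).

Definition word_perm n (w : word g n) : {perm assignment * gT} :=
  (\prod_(j < n) letter_perm (w j))%g.

Lemma word_perm_act n (w : word g n) x y :
  word_perm w (x, y) = (x, y * eval_word x w)%g.
Proof.
rewrite /word_perm /eval_word; elim: (index_enum _) y => [|j js IH] y.
  by rewrite !big_nil perm1 mulg1.
by rewrite !big_cons permM permE /= IH mulgA.
Qed.

Lemma letter_perm_one : 1%g \in [set letter_perm l | l : letter g].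
Proof.
apply/imsetP; exists None => //.
by apply/permP => -[x y]; rewrite perm1 permE /= mulg1.
Qed.

Definition pres_perms n (P : presentation g r n) : perm_pres :=
  [ffun j => word_perm (P j)].

Lemma card_pres_perms n (Phi : pred perm_pres) :
  #|[set P : presentation g r n | Phi (pres_perms P)]| =
  \sum_(F | Phi F) \prod_(j < r) walk_count letter_perm n (F j).
Proof.
rewrite -sum1_card (partition_big (@pres_perms n) Phi) => [|P]; last by rewrite inE.
apply: eq_bigr => F PhiF; rewrite sum1dep_card.
transitivity #|family (fun j => [pred w : word g n | word_perm w == F j])|.
  apply: eq_card => P; rewrite !inE; apply/andP/familyP => [[_ /eqP <-] j|P_F].
    by rewrite ffunE inE.
  suff -> : pres_perms P = F by rewrite PhiF.
  by apply/ffunP => j; rewrite ffunE; apply/eqP; have := P_F j; rewrite inE.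
rewrite card_family foldrE big_map enumT; apply: eq_bigr => j _.
by apply: eq_card => w; rewrite !inE.
Qed.

Lemma prob_pres_event_cvg (E : forall n, pred (presentation g r n))
    (Phi : pred perm_pres) :
  (forall n (P : presentation g r n), E n P = Phi (pres_perms P)) ->
  exists l : R, is_lim_seq
    (fun n => INR #|[set P | E n P]| / INR #|{: presentation g r n}| : R) l.
Proof.
move=> E_Phi; eexists.
apply: is_lim_seq_ext (is_lim_seq_sum (r := index_enum _) (P := Phi) (fun F _ =>
  is_lim_seq_prod (r := index_enum 'I_r) (P := xpredT)
    (fun j _ => walk_prob_lim (k := F j) letter_perm_one))) => n.
under eq_finset do rewrite E_Phi.
rewrite RdivE !INRE card_pres_perms natr_sum mulr_suml.
apply: eq_bigr => F _; rewrite big_split /= prodr_const card_ord natr_prod exprVn -natrX.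
by rewrite card_ffun card_ord card_ffun card_ord.
Qed.

Definition epis_of_perms (F : perm_pres) : {set assignment} :=
  [set x : assignment | (<<[set x i | i : 'I_g]>>%g == [set: gT]) &&
                        [forall j, ((F j) (x, 1%g)).2 == 1%g]].

Lemma epis_pres_perms n (P : presentation g r n) :
  epis gT P = epis_of_perms (pres_perms P).
Proof.
apply/setP => x; rewrite !inE; congr (_ && _).
by apply: eq_forallb => j; rewrite ffunE word_perm_act /= mul1g.
Qed.

End PresentationPerms.

Unset Implicit Arguments.

Theorem proposition3p2 (gT : finGroupType) (g r : nat) :
  (0 < g)%N -> (0 < r)%N ->
  (exists l : R, is_lim_seq (fun n : nat => p_epi gT g r n) l) /\
  (forall k : nat,
     exists l : R, is_lim_seq (fun n : nat => p_epi_exactly gT g r k n) l).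
Proof.
move=> _ _; split => [|k].
  apply: (prob_pres_event_cvg (Phi := fun F => epis_of_perms F != set0)) => n P.
  by rewrite epis_pres_perms.
apply: (prob_pres_event_cvg
  (Phi := fun F => #|[set aut_orbit x | x in epis_of_perms F]| == k)) => n P.
by rewrite /num_epi_mod_aut epis_pres_perms.
Qed.
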